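(* There exist a compact set $\mathcal{X}\subseteq\mathbb{R}^n$, a set $\mathcal{X}_0\subseteq\mathcal{X}$, a map $f:\mathcal{X}\to\mathcal{X}$ and a set $\mathcal{X}_{INF}\subseteq\mathcal{X}$ such that for every $x_0\in\mathcal{X}_0$ the state sequence $x_{k+1}=f(x_k)$ satisfies $x_k\in\mathcal{X}_{INF}$ for infinitely many $k$, but there is no bounded function $\mathcal{T}:\mathcal{X}\times\mathcal{X}\to\mathbb{R}$ together with a constant $\xi>0$ satisfying: (i) $\mathcal{T}(x,f(x))\geq0$ for all $x\in\mathcal{X}$; (ii) for all $x,y\in\mathcal{X}$: if $\mathcal{T}(x,f(x))\geq 0$ and $\mathcal{T}(f(x),y)\geq0$, then $\mathcal{T}(x,y)\geq0$; (iii) for all $x_0\in\mathcal{X}_0$ and all $y\in\mathcal{X}\setminus\mathcal{X}_{INF}$: if $\mathcal{T}(x_0,y)\geq0$ and $\mathcal{T}(y,f(y))\geq 0$, then $\mathcal{T}(x_0,f(y))\geq\mathcal{T}(x_0,y)+\xi$.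
   Context: A discrete-time dynamical system $(\mathcal{X},\mathcal{X}_0,f)$ (a control system with a single input) has state sequences $\langle x_0,x_1,\ldots\rangle$ with $x_0\in\mathcal{X}_0$ and $x_{k+1}=f(x_k)$. Conditions (i)–(iii) with bounded $\mathcal{T}$ constitute a (control) closure certificate for recurrence of $\mathcal{X}_{INF}$ in the single-input case. *)

From HB Require Import structures.
From mathcomp Require Import all_boot all_order all_algebra.
From mathcomp Require Import all_classical all_reals all_analysis.
Set Implicit Arguments. Unset Strict Implicit. Unset Printing Implicit Defensive.
Import Order.TTheory GRing.Theory Num.Theory.
Local Open Scope classical_set_scope.
Local Open Scope ring_scope.

Definition state_seq {T : Type} (f : T -> T) (x0 : T) (k : nat) : T := iter k f x0.

Definition closure_certificate {R : realType} {n : nat}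
  (X X0 XINF : set 'rV[R]_n) (f : 'rV[R]_n -> 'rV[R]_n)
  (T : 'rV[R]_n -> 'rV[R]_n -> R) (xi : R) : Prop :=
  (exists M : R, forall x y, X x -> X y -> `|T x y| <= M) /\
  0 < xi /\
  (forall x, X x -> 0 <= T x (f x)) /\
  (forall x y, X x -> X y -> 0 <= T x (f x) -> 0 <= T (f x) y -> 0 <= T x y) /\
  (forall x0 y, X0 x0 -> X y -> ~ XINF y ->
     0 <= T x0 y -> 0 <= T y (f y) -> T x0 (f y) >= T x0 y + xi).

From HB Require Import structures.
From mathcomp Require Import all_boot all_order all_algebra.
From mathcomp Require Import all_classical all_reals all_analysis.
From mathcomp Require Import ring lra zify.
Set Implicit Arguments. Unset Strict Implicit.
Import Order.TTheory GRing.Theory Num.Theory.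
Import numFieldNormedType.Exports.
Local Open Scope classical_set_scope.
Local Open Scope ring_scope.

(* A bounded closure certificate forces a uniform bound on the time every
   initial state needs to reach XINF: along an orbit, (i) and (ii) keep
   [T x0 (f^k x0)] nonnegative, and (iii) raises it by xi at every step spent
   outside XINF, so it would exceed the bound M after M / xi steps.  The
   segment of multiples of (1, ..., 1) with the map sending 1/(k+2) to
   1/(k+1) and fixing 1 visits 1 forever from every point 1/(k+1), but only
   after k steps, which cannot be bounded uniformly. *)

Section ClosureCertificate.
Variables (R : realType) (n : nat) (X X0 XINF : set 'rV[R]_n).
Variables (f : 'rV[R]_n -> 'rV[R]_n) (T : 'rV[R]_n -> 'rV[R]_n -> R) (xi : R).
Hypothesis fX : forall x, X x -> X (f x).
Hypothesis X0X : X0 `<=` X.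
Hypothesis T_step : forall x, X x -> 0 <= T x (f x).
Hypothesis T_trans : forall x y, X x -> X y ->
  0 <= T x (f x) -> 0 <= T (f x) y -> 0 <= T x y.
Hypothesis T_progress : forall x0 y, X0 x0 -> X y -> ~ XINF y ->
  0 <= T x0 y -> 0 <= T y (f y) -> T x0 (f y) >= T x0 y + xi.

Lemma state_seq_in x k : X x -> X (state_seq f x k).
Proof. by move=> Xx; elim: k => // k IH; rewrite /state_seq iterS; apply: fX. Qed.

Lemma certificate_reach x k : X x -> 0 <= T x (state_seq f x k.+1).
Proof.
elim: k x => [|k IH] x Xx; first exact: T_step.
apply: T_trans => //; [exact: state_seq_in | exact: T_step |].
by rewrite /state_seq iterSr; apply: IH; apply: fX.
Qed.

Lemma certificate_progress x0 m : X0 x0 ->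
  (forall k, (0 < k <= m)%N -> ~ XINF (state_seq f x0 k)) ->
  m%:R * xi <= T x0 (state_seq f x0 m.+1).
Proof.
move=> X0x0; have Xx0 := X0X X0x0.
elim: m => [_|m IH miss]; first by rewrite mul0r; apply: certificate_reach.
have -> : state_seq f x0 m.+2 = f (state_seq f x0 m.+1) by rewrite /state_seq iterS.
have miss_m k : (0 < k <= m)%N -> ~ XINF (state_seq f x0 k).
  by case/andP=> k0 km; apply: miss; rewrite k0 leqW.
have Xy := state_seq_in m.+1 Xx0.
have := T_progress X0x0 Xy (miss m.+1 (leqnn _)) (certificate_reach m Xx0)
  (T_step Xy).
have := IH miss_m.
rewrite -natr1 mulrDl mul1r; lra.
Qed.

End ClosureCertificate.

Lemma closure_certificate_uniform_visit (R : realType) (n : nat)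
    (X X0 XINF : set 'rV[R]_n) (f : 'rV[R]_n -> 'rV[R]_n)
    (T : 'rV[R]_n -> 'rV[R]_n -> R) (xi : R) :
  (forall x, X x -> X (f x)) -> X0 `<=` X ->
  closure_certificate X X0 XINF f T xi ->
  exists N : nat, forall x0, X0 x0 ->
    exists2 k, (0 < k <= N)%N & XINF (state_seq f x0 k).
Proof.
move=> fX X0X [[M T_bound] [xi_gt0 [T_step [T_trans T_progress]]]].
pose N := Num.Def.archi_bound (`|M| / xi).
have N_large : M < N%:R * xi.
  rewrite -ltr_pdivrMr //; apply: le_lt_trans (archi_boundP _).
    by rewrite ler_pM2r ?invr_gt0 ?ler_norm.
  by rewrite divr_ge0 // ltW.
exists N => x0 X0x0; have Xx0 := X0X _ X0x0.
apply: contrapT => no_visit.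
have miss k : (0 < k <= N)%N -> ~ XINF (state_seq f x0 k).
  by move=> kN visit; apply: no_visit; exists k.
have := certificate_progress fX X0X T_step T_trans T_progress X0x0 miss.
have := T_bound _ _ Xx0 (state_seq_in fX N.+1 Xx0).
have := ler_norm (T x0 (state_seq f x0 N.+1)).
lra.
Qed.

Lemma infinite_set_of_eventually (P : nat -> Prop) (m : nat) :
  (forall k, (m <= k)%N -> P k) -> ~ finite_set [set k | P k].
Proof.
move=> Pge fin; apply: infinite_nat.
have -> : [set: nat] = `I_m `|` [set k | P k].
  apply/seteqP; split => k //= _.
  by case: (ltnP k m) => km; [left | right; apply: Pge].
by rewrite finite_setU; split; [exact: finite_II | exact: fin].
Qed.

Section HarmonicSegment.
Variables (R : realType) (n : nat).

Definition diag_pt (t : R) : 'rV[R]_n := t *: const_mx 1.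

Definition unit_segment : set 'rV[R]_n := [set diag_pt t | t in `[0, 1]].

Definition harmonic_pt (k : nat) : 'rV[R]_n := diag_pt k.+1%:R^-1.

Definition harmonic_pred (t : R) : R := if t <= 2^-1 then t / (1 - t) else 1.

Definition segment_map (hn : (0 < n)%N) (x : 'rV[R]_n) : 'rV[R]_n :=
  diag_pt (harmonic_pred (x ord0 (Ordinal hn))).

Lemma diag_ptE t i j : diag_pt t i j = t.
Proof. by rewrite !mxE mulr1. Qed.

Lemma harmonic_pred_inv k : harmonic_pred k.+1%:R^-1 = k.-1.+1%:R^-1.
Proof.
rewrite /harmonic_pred; case: k => [|k] /=.
  by rewrite invr1 ifF //; apply/negbTE; rewrite -ltNge; lra.
rewrite ifT; last by rewrite lef_pV2 ?posrE ?ltr0n // ler_nat.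
have k1_gt0 : 0 < k.+1%:R :> R by rewrite ltr0n.
rewrite -addn1 natrD; field.
by apply/andP; split; apply: lt0r_neq0; lra.
Qed.

Lemma harmonic_pred_itv t : 0 <= t <= 1 -> 0 <= harmonic_pred t <= 1.
Proof.
case/andP=> t_ge0 t_le1; rewrite /harmonic_pred; case: ifP => t_small; last lra.
have gap_gt0 : 0 < 1 - t by lra.
by rewrite divr_ge0 ?ler_pdivrMr //=; lra.
Qed.

Lemma harmonic_pt_inj : (0 < n)%N -> injective harmonic_pt.
Proof.
move=> hn i j /(congr1 (fun x : 'rV[R]_n => x ord0 (Ordinal hn))).
by rewrite !diag_ptE => /invr_inj /eqP; rewrite eqr_nat => /eqP [].
Qed.

Lemma harmonic_pt_in k : unit_segment (harmonic_pt k).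
Proof.
exists k.+1%:R^-1 => //; rewrite /= in_itv /= invr_ge0 ler0n /=.
by rewrite invf_le1 ?ltr0n // ler1n.
Qed.

Lemma unit_segment_compact : compact unit_segment.
Proof.
apply: continuous_compact; last exact: segment_compact.
by apply: continuous_subspaceT; exact: scalel_continuous.
Qed.

Variable hn : (0 < n)%N.

Lemma segment_map_in x : unit_segment x -> unit_segment (segment_map hn x).
Proof.
case=> t /= t01 <-; exists (harmonic_pred t); last by rewrite /segment_map diag_ptE.
by move: t01; rewrite /= !in_itv /= => /harmonic_pred_itv.
Qed.

Lemma segment_map_harmonic k : segment_map hn (harmonic_pt k) = harmonic_pt k.-1.
Proof. by rewrite /segment_map diag_ptE harmonic_pred_inv. Qed.

Lemma harmonic_orbit m k :
  state_seq (segment_map hn) (harmonic_pt m) k = harmonic_pt (m - k).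
Proof.
elim: k => [|k IH]; first by rewrite subn0.
by rewrite /state_seq iterS -/(state_seq _ _ k) IH segment_map_harmonic subnS.
Qed.

End HarmonicSegment.

Arguments unit_segment {R n} _.
Arguments harmonic_pt {R n} k.

Theorem lemma2 (R : realType) (n : nat) (hn : (0 < n)%N) :
  exists (X X0 XINF : set 'rV[R]_n) (f : 'rV[R]_n -> 'rV[R]_n),
    compact X /\ X0 `<=` X /\ XINF `<=` X /\
    (forall x, X x -> X (f x)) /\
    (forall x0, X0 x0 -> ~ finite_set [set k : nat | XINF (state_seq f x0 k)]) /\
    ~ (exists (T : 'rV[R]_n -> 'rV[R]_n -> R) (xi : R),
         closure_certificate X X0 XINF f T xi).
Proof.
have X0X : range harmonic_pt `<=` @unit_segment R n.
  by move=> _ [k _ <-]; apply: harmonic_pt_in.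
exists unit_segment, (range harmonic_pt), [set harmonic_pt 0], (segment_map hn).
split; first exact: unit_segment_compact.
split=> //; split; first by move=> _ ->; apply: harmonic_pt_in.
split; first exact: segment_map_in.
split.
  move=> _ [m _ <-]; apply: (infinite_set_of_eventually (m := m)) => k mk /=.
  by rewrite harmonic_orbit; move: mk; rewrite -subn_eq0 => /eqP ->.
move=> [T [xi cert]].
have [N visit] := closure_certificate_uniform_visit (segment_map_in hn) X0X cert.
have [k /andP[_ kN]] := visit _ (ex_intro2 _ _ N.+1 I erefl).
rewrite /= harmonic_orbit => /(harmonic_pt_inj hn); lia.
Qed.
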